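(* Consider smoothed MaxSat/1-Flip on a CNF formula with $n$ variables and $m$ clauses, where each clause weight $w_i$ is drawn independently from a distribution with density $f_i:[0,1]\to[0,\phi]$, and let $B$ be the maximum number of distinct clauses in which any variable occurs. Then the expected maximum number of iterations of local search (over all initial assignments and all improving sequences) is $O(2^B n m^2\phi)$.
   Context: MaxSat/$k$-Flip: given a CNF formula with clauses $C_1,\dots,C_m$ over Boolean variables $x_1,\dots,x_n$ and clause weights $w_1,\dots,w_m$, the weight of a truth assignment is the total weight of satisfied clauses; the $k$-Flip neighbours of an assignment are those obtained by changing the truth value of at most $k$ variables; a solution is an assignment with no neighbour of strictly larger weight. Local search repeatedly moves to a strictly better neighbour. *)

From HB Require Import structures.
From mathcomp Require Import all_boot all_order all_algebra.
From mathcomp Require Import all_classical all_reals all_analysis.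
Set Implicit Arguments. Unset Strict Implicit. Unset Printing Implicit Defensive.
Import Order.TTheory GRing.Theory Num.Theory.
Local Open Scope classical_set_scope.
Local Open Scope ring_scope.

(* A literal over variables 'I_n: (variable, polarity); (x, true) is x,
   (x, false) is the negation of x.  A clause is a list of literals. *)
Definition literal (n : nat) := ('I_n * bool)%type.
Definition clause (n : nat) := seq (literal n).
Definition assignment (n : nat) := {ffun 'I_n -> bool}.

Definition lit_sat n (a : assignment n) (l : literal n) : bool := a l.1 == l.2.
Definition clause_sat n (a : assignment n) (c : clause n) : bool :=
  has (lit_sat a) c.

Definition weight (R : realType) n m (C : 'I_m -> clause n) (w : 'I_m -> R)
    (a : assignment n) : R :=
  \sum_(i < m | clause_sat a (C i)) w i.

(* a' is a 1-Flip neighbour of a obtained by flipping exactly one variable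
   (flipping zero variables never gives a strictly better neighbour) *)
Definition flip1 n (a a' : assignment n) : bool :=
  #|[set j | a j != a' j]| == 1%N.

Definition improving (R : realType) n m (C : 'I_m -> clause n) (w : 'I_m -> R)
    : rel (assignment n) :=
  fun a a' => flip1 a a' && (weight C w a < weight C w a').

Definition max_iterations (R : realType) n m (C : 'I_m -> clause n)
    (w : 'I_m -> R) : \bar R :=
  ereal_sup [set ((size s)%:R)%:E | s in
              [set s : seq (assignment n) |
                 exists a0 : assignment n, path (improving C w) a0 s]].

Definition max_occ n m (C : 'I_m -> clause n) : nat :=
  \max_(x < n) #|[set i : 'I_m | x \in map fst (C i)]|.

(* Expectation w.r.t. independent weights w_1,...,w_k with densities
   f_1,...,f_k on [0,1]: iterated Lebesgue integral
   int_0^1 f_1(w_1) ... int_0^1 f_k(w_k) g(w_1,...,w_k) dw_k ... dw_1. *)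
Fixpoint iter_expect (R : realType) (fs : seq (R -> R)) (g : seq R -> \bar R)
    : \bar R :=
  match fs with
  | [::] => g [::]
  | f :: fs' =>
      (\int[lebesgue_measure]_(x in `[0%R, 1%R]%classic)
         ((f x)%:E * iter_expect fs' (fun ws => g (x :: ws))))%E
  end.

Definition expected_max_iterations (R : realType) n m (C : 'I_m -> clause n)
    (f : 'I_m -> R -> R) : \bar R :=
  iter_expect [seq f i | i <- enum 'I_m]
    (fun ws => max_iterations C (fun i : 'I_m => nth 0 ws i)).

From mathcomp Require Import all_boot all_order all_algebra.
From mathcomp Require Import all_classical all_reals all_analysis.
From mathcomp Require Import measurable_realfun.
From mathcomp Require Import ring lra zify.
Set Implicit Arguments. Unset Strict Implicit. Unset Printing Implicit Defensive.
Import Order.TTheory GRing.Theory Num.Theory.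
Local Open Scope ring_scope.

(* Along an improving path of length [s] some step has gain [g] with [s * g <= m],
   since every weight lies in [0, m].  A 1-flip step setting [x] to [b] changes the
   satisfaction of exactly the clauses of a nonempty set [D] of clauses sensitive to
   that flip (at most [2^B] such sets), and its gain is a linear form
   [\sum_(i in D) +-w_i].  Hence the number of iterations is bounded pointwise by the
   sum of [2^(k+1) * 1(0 < \sum_(i in D) +-w_i < 2m / 2^k)] over [k <= m], [x], [b]
   and [D].  Integrating out first the weight of largest index in [D], each
   indicator has probability at most [phi * 2m / 2^k], so each of the
   [2 (m+1) n 2^B] terms contributes at most [4 m phi]. *)

(* Unlike [ge0_le_integral], no measurability is needed: the integrands of
   [iter_expect] are not known to be measurable. *)
Lemma le_integral_pointwise d (T : measurableType d) (R : realType)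
    (mu : {measure set T -> \bar R}) (D : set T) (F G : T -> \bar R) :
  (forall x, D x -> (F x <= G x)%E) ->
  (\int[mu]_(x in D) F x <= \int[mu]_(x in D) G x)%E.
Proof.
move=> FG.
have FGD : {in [set: T]%classic, forall x, ((F \_ D) x <= (G \_ D) x)%E}.
  by move=> x _; rewrite /patch; case: ifPn => // /[!inE] /FG.
rewrite /integral; apply: leeB; apply: le_ereal_sup => _ [h hle <-];
  exists h => //= x; apply: (le_trans (hle x)).
- by apply: (funepos_le FGD); rewrite inE.
- by apply: (funeneg_le FGD); rewrite inE.
Qed.

Section Bands.
Variable R : realType.
Local Open Scope classical_set_scope.
Local Open Scope ring_scope.
Local Notation I01 := `[(0:R), (1:R)]%classic.

Definition band (b v e x : R) : R := if (0 < b + v * x) && (b + v * x < e) then 1 else 0.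

Definition density (phi : R) (f : R -> R) : Prop :=
  [/\ measurable_fun I01 f, forall x, x \in `[(0:R), (1:R)] -> 0 <= f x <= phi
    & (\int[lebesgue_measure]_(x in I01) (f x)%:E = 1)%E].

Lemma density_bound_ge0 phi f : density phi f -> 0 <= phi.
Proof.
case=> _ fb _; have /andP[f0 f_phi] := fb 0 (ltac:(by rewrite in_itv /= lexx ler01)).
exact: le_trans f0 f_phi.
Qed.

Lemma band_ge0 b v e x : 0 <= band b v e x.
Proof. by rewrite /band; case: ifP. Qed.

Lemma measurable_band b v e : measurable_fun I01 (band b v e).
Proof.
have -> : band b v e = \1_([set` `]0, e[%R]) \o (fun x => b + v * x).
  by apply/funext => x; rewrite /band /= indicE mem_setE in_itv /=; case: ifP.
apply: measurable_funTS; apply: measurableT_comp.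
  by apply: measurable_indic; exact: measurable_itv.
by apply: measurable_funD => //; exact: measurable_funM.
Qed.

Lemma band_unit_slope b v e : v = 1 \/ v = -1 ->
  exists l, band b v e = \1_([set` `]l, l + e[%R]).
Proof.
move=> [->|->]; [exists (- b) | exists (b - e)]; apply/funext => x;
  rewrite /band indicE mem_setE in_itv /=.
- have -> : (0 < b + 1 * x) && (b + 1 * x < e) = (- b < x) && (x < - b + e).
    by apply/andP/andP => -[h1 h2]; split; lra.
  by case: (_ && _).
- have -> : (0 < b + -1 * x) && (b + -1 * x < e) = (b - e < x) && (x < b - e + e).
    by apply/andP/andP => -[h1 h2]; split; lra.
  by case: (_ && _).
Qed.

Lemma integral_band_le b v e c : v = 1 \/ v = -1 -> 0 <= c -> 0 <= e ->
  (\int[lebesgue_measure]_(x in I01) (c * band b v e x)%:E <= (c * e)%:E)%E.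
Proof.
move=> /(band_unit_slope b e) [l ->] c0 e0.
under eq_integral => x _ do rewrite EFinM.
rewrite ge0_integralZl_EFin //; last first.
  by apply/measurable_EFinP; apply: measurable_indic; exact: measurable_itv.
rewrite integral_indic; [|exact: measurable_itv|exact: measurable_itv].
rewrite EFinM lee_wpmul2l ?lee_fin //.
apply: le_trans; first by apply: measureIl; exact: measurable_itv.
have := lebesgue_measure_itv `]l, (l + e)%R[; rewrite /= => ->.
case: ifPn => _; last by rewrite lee_fin.
by rewrite -EFinD lee_fin addrAC subrr add0r.
Qed.

Lemma integral_density_bands (f : R -> R) (phi K : R) (I : finType) (P : pred I)
    (a b v e : I -> R) :
  density phi f -> 0 <= K ->
  (forall q, P q -> [/\ 0 <= a q, 0 <= e q & v q = 1 \/ v q = -1]) ->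
  (\int[lebesgue_measure]_(x in I01)
      (f x * K + \sum_(q | P q) phi * a q * band (b q) (v q) (e q) x)%:E
    <= (K + \sum_(q | P q) a q * phi * e q)%:E)%E.
Proof.
move=> dens K0 hq; have phi0 := density_bound_ge0 dens; case: dens => mf fb f1.
pose F q x := if P q then phi * a q * band (b q) (v q) (e q) x else 0.
have F0 q x : 0 <= F q x.
  rewrite /F; case: ifP => // /hq [a0 _ _]; by rewrite !mulr_ge0 ?band_ge0.
have mF q : measurable_fun I01 (F q).
  rewrite /F; case: (P q); last exact: measurable_cst.
  exact: measurable_funM (measurable_cst _) (measurable_band _ _ _).
rewrite [in X in (_ <= X)%E]big_mkcond EFinD /=.
under eq_integral => x _ do rewrite big_mkcond EFinD /=.
rewrite ge0_integralD //; first last.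
- by apply/measurable_EFinP; exact: measurable_sum.
- by move=> x _; rewrite lee_fin; apply: sumr_ge0 => q _; exact: F0.
- by apply/measurable_EFinP; exact: measurable_funM mf (measurable_cst K).
- by move=> x /fb /andP[f0 _]; rewrite lee_fin mulr_ge0.
apply: leeD.
  under eq_integral => x _ do rewrite EFinM.
  rewrite ge0_integralZr ?f1 ?mul1e //; first exact/measurable_EFinP.
  by move=> x /fb /andP[f0 _]; rewrite lee_fin.
under eq_integral => x _ do rewrite -sumEFin.
rewrite ge0_integral_sum -?sumEFin; first last.
- by move=> q x _; rewrite lee_fin; exact: F0.
- by move=> q; apply/measurable_EFinP; exact: mF.
- exact: measurable_itv.
apply: lee_sum => q _; rewrite /F; case: ifPn => [/hq [a0 e0 hv]|_].
  by rewrite [_ * phi]mulrC; apply: integral_band_le; rewrite ?mulr_ge0.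
by rewrite integral0.
Qed.

End Bands.

(* A slab stands for [height * 1(0 < offset + \sum_j normal j * w_j < width)];
   [slab_ok] makes [pivot] the last weight it depends on, with coefficient [+-1]. *)
Record slab (R : Type) := Slab {
  height : R; offset : R; normal : nat -> R; pivot : nat; width : R }.

Section Slabs.
Variable R : realType.
Implicit Types (t : slab R) (w : seq R).

Definition slab_form t w : R :=
  offset t + \sum_(0 <= j < size w) normal t j * nth 0 w j.

Definition slab_ind t w : R :=
  if (0 < slab_form t w) && (slab_form t w < width t) then 1 else 0.

Definition slab_shift (x : R) t : slab R :=
  Slab (height t) (offset t + normal t 0 * x) (fun j => normal t j.+1)
       (pivot t).-1 (width t).

Definition slab0 : slab R := Slab 0 0 (fun _ => 0) 0 0.

Definition slab_ok (L : nat) t : Prop :=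
  [/\ 0 <= height t, 0 <= width t &
      height t != 0 -> [/\ normal t (pivot t) = 1 \/ normal t (pivot t) = -1,
                           forall j, (pivot t < j)%N -> normal t j = 0
                         & (pivot t < L)%N]].

Definition pivot0 t := (height t != 0) && (pivot t == 0)%N.

Definition slab_tail (x : R) t := if pivot0 t then slab0 else slab_shift x t.

Definition unit_box w := all (fun x => 0 <= x <= 1) w.

Lemma slab_ind_ge0 t w : 0 <= slab_ind t w.
Proof. by rewrite /slab_ind; case: ifP. Qed.

Lemma slab_form_cons x t w : slab_form t (x :: w) = slab_form (slab_shift x t) w.
Proof. by rewrite /slab_form /= big_nat_recl //= -addrA. Qed.

Lemma slab_ind_cons x t w : slab_ind t (x :: w) = slab_ind (slab_shift x t) w.
Proof. by rewrite /slab_ind slab_form_cons. Qed.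

Lemma slab_ind_pivot0 L x t w : slab_ok L t -> pivot0 t ->
  slab_ind t (x :: w) = band (offset t) (normal t 0) (width t) x.
Proof.
move=> [_ _ ht] /andP[/ht [_ v0 _] /eqP p0].
rewrite slab_ind_cons /slab_ind /band /slab_form /= big1_seq ?addr0 // => j _.
by rewrite v0 ?mul0r // p0.
Qed.

Lemma slab_ok_pivot0 L t : slab_ok L t -> pivot0 t ->
  [/\ 0 <= height t, 0 <= width t & normal t 0 = 1 \/ normal t 0 = -1].
Proof. by move=> [h0 e0 ht] /andP[/ht [hv _ _] /eqP p0]; rewrite -p0. Qed.

Lemma slab_ok_tail L x t : slab_ok L.+1 t -> slab_ok L (slab_tail x t).
Proof.
rewrite /slab_tail; case: ifPn => [_ _|np0 [h0 e0 ht]]; first by split; rewrite /= ?lexx ?eqxx.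
split => //= hn0; have [hv hz hL] := ht hn0.
have pn : pivot t != 0%N by move: np0; rewrite /pivot0 hn0.
by case: (pivot t) pn hv hz hL => // p _ hv hz hL; split => // j hj; apply: hz.
Qed.

Lemma sum_slab_ind_cons (I : finType) (ts : I -> slab R) L x w :
  (forall q, slab_ok L (ts q)) ->
  \sum_q height (ts q) * slab_ind (ts q) (x :: w) =
    \sum_(q | pivot0 (ts q))
       height (ts q) * band (offset (ts q)) (normal (ts q) 0) (width (ts q)) x
    + \sum_q height (slab_tail x (ts q)) * slab_ind (slab_tail x (ts q)) w.
Proof.
move=> ok; rewrite (bigID (fun q => pivot0 (ts q))) /=; congr (_ + _).
  by apply: eq_bigr => q p0; rewrite (slab_ind_pivot0 _ _ (ok q)).
rewrite [RHS](bigID (fun q => pivot0 (ts q))) /= [in RHS]big1 ?add0r; last first.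
  by move=> q p0; rewrite /slab_tail p0 mul0r.
by apply: eq_bigr => q /negbTE np0; rewrite /slab_tail np0 slab_ind_cons.
Qed.

Lemma sum_slab_mass_tail (I : finType) (ts : I -> slab R) (phi x : R) :
  \sum_q height (slab_tail x (ts q)) * phi * width (slab_tail x (ts q)) =
  \sum_(q | ~~ pivot0 (ts q)) height (ts q) * phi * width (ts q).
Proof.
rewrite (bigID (fun q => pivot0 (ts q))) /= big1 ?add0r; last first.
  by move=> q p0; rewrite /slab_tail p0 /= !mul0r.
by apply: eq_bigr => q /negbTE np0; rewrite /slab_tail np0.
Qed.

(* The weights are integrated out in order: a slab whose pivot is the current
   weight is a band in that weight and costs at most [height * phi * width] against
   its density; the other slabs are passed on with the current weight substituted. *)
Lemma iter_expect_slabs_le (phi : R) (fs : seq (R -> R)) :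
  List.Forall (density phi) fs ->
  forall (I : finType) (ts : I -> slab R) (g : seq R -> \bar R) (c : R),
  0 <= c -> (forall q, slab_ok (size fs) (ts q)) ->
  (forall w, size w = size fs -> unit_box w ->
     (g w <= (c + \sum_q height (ts q) * slab_ind (ts q) w)%:E)%E) ->
  (iter_expect fs g <= (c + \sum_q height (ts q) * phi * width (ts q))%:E)%E.
Proof.
elim: fs => [|f fs IH] dens I ts g c c0 ok hg /=.
  have h0 q : height (ts q) = 0.
    by have [_ _ ht] := ok q; apply/eqP; apply: contraT => /ht [].
  by apply: le_trans (hg [::] erefl isT) _; rewrite !big1 // => q _; rewrite h0 !mul0r.
have [densf dens'] : density phi f /\ List.Forall (density phi) fs.
  by inversion dens.
have phi0 := density_bound_ge0 densf; have [_ fb _] := densf.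
pose K := c + \sum_(q | ~~ pivot0 (ts q)) height (ts q) * phi * width (ts q).
have K0 : 0 <= K.
  by rewrite addr_ge0 // sumr_ge0 // => q _; have [h0 e0 _] := ok q; rewrite !mulr_ge0.
pose bands x := \sum_(q | pivot0 (ts q))
  height (ts q) * band (offset (ts q)) (normal (ts q) 0) (width (ts q)) x.
have iter_le x : x \in `[(0:R), (1:R)] ->
    (iter_expect fs (fun w => g (x :: w)) <= (K + bands x)%:E)%E.
  move=> x01; have c'0 : 0 <= c + bands x.
    rewrite addr_ge0 // sumr_ge0 // => q _; have [h0 _ _] := ok q.
    by rewrite mulr_ge0 ?band_ge0.
  have := IH dens' I (fun q => slab_tail x (ts q)) _ _ c'0.
  rewrite sum_slab_mass_tail addrAC; apply => [q|w sw box]; first exact: slab_ok_tail.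
  rewrite -addrA -(sum_slab_ind_cons _ _ ok); apply: hg; first by rewrite /= sw.
  by move: x01; rewrite /unit_box /= in_itv /= => ->.
apply: le_trans (_ : (\int[lebesgue_measure]_(x in `[0%R, 1%R]%classic)
    (f x * K + \sum_(q | pivot0 (ts q)) phi * height (ts q) *
       band (offset (ts q)) (normal (ts q) 0) (width (ts q)) x)%:E <= _)%E).
  apply: le_integral_pointwise => x x01; have /andP[f0 f_phi] := fb x x01.
  apply: le_trans; first by apply: lee_wpmul2l; [rewrite lee_fin | exact: iter_le].
  rewrite -EFinM lee_fin mulrDr lerD2l mulr_sumr ler_sum // => q p0.
  by rewrite mulrA ler_wpM2r ?band_ge0 // ler_wpM2r //; have [] := slab_ok_pivot0 (ok q) p0.
apply: le_trans (integral_density_bands _ densf K0 (fun q => slab_ok_pivot0 (ok q))) _.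
rewrite [X in (_ <= (_ + X)%:E)%E](bigID (fun q => pivot0 (ts q))) /=.
by rewrite /K -addrA [X in _ + X]addrC.
Qed.

End Slabs.

Lemma card_classic_set (T : finType) (P : pred T) : #|[set x | P x]%classic| = #|P|.
Proof. by apply: eq_card => x; rewrite /in_mem /= /in_set /= asboolb. Qed.

Section Flips.
Variable n : nat.
Implicit Types (a u : assignment n) (c : clause n).

Lemma clause_sat_split a x c : clause_sat a c =
  has (fun l : literal n => (l.1 != x) && lit_sat a l) c || ((x, a x) \in c).
Proof.
elim: c => //= -[y bl] c IH; rewrite IH in_cons /lit_sat /= xpair_eqE.
case: (eqVneq x y) => [<-|_] /=; last by rewrite orbA.
by case: (a x == bl); case: has; case: (_ \in _).
Qed.

Definition flip_coef x (b : bool) c : int :=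
  if ((x, b) \in c) && ((x, ~~ b) \notin c) then 1
  else if ((x, ~~ b) \in c) && ((x, b) \notin c) then -1 else 0.

Lemma flip_coef_pm (R : realType) x b c : flip_coef x b c != 0 ->
  ((flip_coef x b c)%:~R = 1 :> R) \/ ((flip_coef x b c)%:~R = -1 :> R).
Proof. by rewrite /flip_coef; case: ifP => _; [left | case: ifP => _; [right|]]. Qed.

Lemma clause_sat_flip u u' x c :
  (forall j, j != x -> u' j = u j) -> u x = ~~ u' x ->
  clause_sat u' c != clause_sat u c ->
  (clause_sat u' c)%:Z - (clause_sat u c)%:Z = flip_coef x (u' x) c.
Proof.
move=> eqj ux; rewrite (clause_sat_split u' x) (clause_sat_split u x) ux.
have -> : has (fun l : literal n => (l.1 != x) && lit_sat u' l) c =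
          has (fun l : literal n => (l.1 != x) && lit_sat u l) c.
  by apply: eq_has => l; rewrite /lit_sat; case: eqP => //= /eqP /eqj ->.
rewrite /flip_coef.
by case: has; case: ((x, u' x) \in c); case: ((x, ~~ u' x) \in c).
Qed.

Lemma weight_flip (R : realType) m (C : 'I_m -> clause n) (w : 'I_m -> R) u u' x :
  (forall j, j != x -> u' j = u j) -> u x = ~~ u' x ->
  weight C w u' - weight C w u =
  \sum_(i in [set i | clause_sat u' (C i) != clause_sat u (C i)])
     (flip_coef x (u' x) (C i))%:~R * w i.
Proof.
move=> eqj ux; rewrite /weight !(big_mkcond (fun i => clause_sat _ _)) -sumrB.
rewrite (bigID (mem [set i | clause_sat u' (C i) != clause_sat u (C i)])) /=.
rewrite [X in _ + X]big1 ?addr0 => [|i]; last first.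
  by rewrite inE negbK => /eqP ->; rewrite subrr.
apply: eq_bigr => i; rewrite inE => hD.
have := clause_sat_flip eqj ux hD.
by case: (clause_sat u' _) hD; case: (clause_sat u _) => //= _ <-;
  rewrite ?subr0 ?mul1r ?sub0r ?mulN1r.
Qed.

Lemma flip1P u u' : flip1 u u' ->
  exists x, (forall j, j != x -> u' j = u j) /\ u x = ~~ u' x.
Proof.
rewrite /flip1 card_classic_set -cardsE => /cards1P [x hx]; exists x; split.
  move=> j jx; have : j \notin [set j | u j != u' j] by rewrite hx finset.in_set1.
  by rewrite inE negbK => /eqP.
have : x \in [set j | u j != u' j] by rewrite hx finset.set11.
by rewrite inE; case: (u x); case: (u' x).
Qed.

Section ImprovingPaths.
Variables (R : realType) (m : nat) (C : 'I_m -> clause n) (w : 'I_m -> R).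
Local Notation W := (weight C w).

Lemma improving_path_slow_step a0 s : path (improving C w) a0 s -> s != [::] ->
  exists u u', improving C w u u' /\
    (size s)%:R * (W u' - W u) <= W (last a0 s) - W a0.
Proof.
elim: s a0 => [//|u1 s IH] a0 /= /andP [h1 hp] _.
case: s IH hp => [|u2 s] IH hp; first by exists a0, u1; rewrite mul1r.
have [v [v' [hv hle]]] := IH u1 hp isT.
have -> : ((size [:: u1, u2 & s])%:R : R) = 1 + (size s).+1%:R by rewrite /= nat1r.
case: (leP (W u1 - W a0) (W v' - W v)) => hd; last first.
  by exists v, v'; split => //; move: hle; rewrite /=; lra.
exists a0, u1; split => //.
by have := ler_wpM2l (ler0n R (size s).+1) hd; rewrite /= in hle *; lra.
Qed.

Lemma improving_path_size_lt a0 s : path (improving C w) a0 s -> (size s < 2 ^ m)%N.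
Proof.
move=> hp; pose sat a := [set i | clause_sat a (C i)].
have hW : W =1 (fun A : {set 'I_m} => \sum_(i in A) w i) \o sat.
  by move=> a; apply: eq_bigl => i; rewrite inE.
have : uniq (map W (a0 :: s)).
  apply: (sorted_uniq lt_trans ltxx); rewrite /= path_map.
  by apply: sub_path hp => a b /andP[].
rewrite (eq_map hW) map_comp => /map_uniq /card_uniqP; rewrite size_map /= => <-.
have -> : (2 ^ m)%N = #|powerset [set: 'I_m]| by rewrite card_powerset cardsT card_ord.
by apply: subset_leq_card; apply/fintype.subsetP => A _; rewrite powersetE finset.subsetT.
Qed.

Lemma weight_bounds a : (forall i, 0 <= w i <= 1) -> 0 <= W a <= m%:R.
Proof.
move=> hw; apply/andP; split; first by apply: sumr_ge0 => i _; case/andP: (hw i).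
rewrite /weight big_mkcond /= -[m in m%:R](card_ord m) -sumr_const.
by apply: ler_sum => i _; case: ifP => _; [case/andP: (hw i) | exact: ler01].
Qed.

End ImprovingPaths.
End Flips.

Lemma bracket_index d (T : orderType d) (e : nat -> T) (y : T) N :
  (e N <= y)%O -> (y < e 0%N)%O -> exists k, [/\ (k < N)%N, (e k.+1 <= y)%O & (y < e k)%O].
Proof.
elim: N => [|N IH] eN y0; first by have := lt_le_trans y0 eN; rewrite ltxx.
have [yN|] := ltP y (e N); first by exists N.
by move=> /IH /(_ y0) [k [kN ek1 ek]]; exists k; split => //; exact: ltnW.
Qed.

Lemma dyadic_scale (R : realFieldType) (m s : nat) (D : R) :
  (0 < s)%N -> (s < 2 ^ m)%N -> 0 < D -> s%:R * D <= m%:R ->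
  exists k : 'I_m.+1, D < (2 * m)%:R / (2 ^ k)%:R /\ (s <= 2 ^ k.+1)%N.
Proof.
move=> s0 sm D0 sDm; pose e k : R := (2 * m)%:R / (2 ^ k)%:R.
have m0 : (0 : R) < m%:R.
  by apply: lt_le_trans sDm; rewrite mulr_gt0 // ltr0n.
have [Dem|eD] := ltP D (e m).
  exists ord_max; split => //=.
  by rewrite expnS (leq_trans (ltnW sm)) // leq_pmull.
have De0 : D < e 0%N.
  rewrite /e expn0 divr1 natrM; apply: le_lt_trans (_ : D <= m%:R) _; last by lra.
  apply: le_trans sDm; rewrite -[leLHS]mul1r ler_wpM2r ?ler1n //; exact: ltW.
have [k [km ek1 ek]] := bracket_index eD De0.
exists (Ordinal (leqW km)); split => //=.
have P0 : (0 : R) < (2 ^ k.+1)%:R by rewrite ltr0n expn_gt0.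
have eP : e k.+1 * (2 ^ k.+1)%:R = 2 * m%:R by rewrite /e divfK ?natrM // gt_eqF.
have se : s%:R * e k.+1 <= m%:R by apply: le_trans sDm; exact: ler_wpM2l.
have := ler_wpM2r (ltW P0) se.
rewrite -mulrA eP -(ler_nat R) => h.
have s_ge0 : (0 : R) <= s%:R by [].
nra.
Qed.

Section MaxSatSlabs.
Variables (R : realType) (n m : nat) (C : 'I_m -> clause n).

Definition slab_index := ((('I_m.+1 * 'I_n) * bool) * {set 'I_m})%type.

Definition flip_support x b := [set i | flip_coef x b (C i) != 0].

Definition valid_index (q : slab_index) :=
  (0 < #|q.2|)%N && (q.2 \subset flip_support q.1.1.2 q.1.2).

(* The slab [(k, x, b, D)] detects a move setting [x] to [b] that changes exactly
   the clauses of [D] and gains less than [2m / 2^k]; its pivot is the largest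
   clause of [D], whose weight enters the gain with coefficient [+1] or [-1]. *)
Definition maxsat_slab (q : slab_index) : slab R :=
  let: (k, x, b, D) := q in
  if valid_index q then
    Slab (2 ^ k.+1)%:R 0 (fun j => \sum_(i in D | val i == j) (flip_coef x b (C i))%:~R)
      (\max_(i in D) val i) ((2 * m)%:R / (2 ^ k)%:R)
  else slab0 R.

Lemma sum_flip_coef_at x b (D : {set 'I_m}) (j : 'I_m) :
  \sum_(i in D | val i == val j) ((flip_coef x b (C i))%:~R : R) =
  if j \in D then (flip_coef x b (C j))%:~R else 0.
Proof.
case: ifP => jD; last first.
  by apply: big1 => i /andP[iD /eqP/val_inj ij]; move: jD; rewrite -ij iD.
rewrite (eq_bigl (pred1 j)) ?big_pred1_eq // => i /=.
by case: (eqVneq i j) => [->|ne]; rewrite ?jD ?eqxx // val_eqE (negbTE ne) andbF.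
Qed.

Lemma slab_ok_maxsat q : slab_ok m (maxsat_slab q).
Proof.
case: q => [[[k x] b] D]; rewrite /maxsat_slab.
case: ifP => [/andP[D0 DN]|_]; last by split; rewrite /= ?lexx ?eqxx.
split => [||_] /=; rewrite ?ler0n ?divr_ge0 ?ler0n //.
have [i0 i0D max_i0] := eq_bigmax_cond (fun i : 'I_m => val i) D0.
rewrite max_i0; split; last exact: ltn_ord.
- rewrite (sum_flip_coef_at _ _ _ i0) i0D; apply: flip_coef_pm.
  by have := fintype.subsetP DN i0 i0D; rewrite inE.
- move=> j ij; apply: big1 => i /andP[iD /eqP ji]; move: ij.
  by rewrite -ji ltnNge -max_i0 (leq_bigmax_cond _ iD).
Qed.

Lemma slab_form_maxsat k x b D (ws : seq R) : valid_index (k, x, b, D) -> size ws = m ->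
  slab_form (maxsat_slab (k, x, b, D)) ws =
  \sum_(i in D) (flip_coef x b (C i))%:~R * nth 0 ws i.
Proof.
move=> hv sz; rewrite /slab_form /maxsat_slab hv /= add0r sz big_mkord.
rewrite [RHS]big_mkcond; apply: eq_bigr => j _.
by rewrite sum_flip_coef_at; case: ifP => //; rewrite mul0r.
Qed.

Lemma max_iterations_le_slabs (ws : seq R) : size ws = m -> unit_box ws ->
  (max_iterations C (fun i : 'I_m => nth 0%R ws i) <=
    (\sum_q height (maxsat_slab q) * slab_ind (maxsat_slab q) ws)%:E)%E.
Proof.
move=> sz box; set w := fun i : 'I_m => nth 0 ws i.
have w01 i : 0 <= w i <= 1 by apply: (all_nthP (0 : R) box); rewrite sz ltn_ord.
have term0 q : 0 <= height (maxsat_slab q) * slab_ind (maxsat_slab q) ws.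
  by have [h0 _ _] := slab_ok_maxsat q; rewrite mulr_ge0 // slab_ind_ge0.
apply: ub_ereal_sup => _ [s [a0 hp] <-]; rewrite lee_fin.
case: s hp => [|u1 s'] hp; first exact: sumr_ge0.
have [u [u' [/andP [hflip hlt] slow]]] := improving_path_slow_step hp isT.
set gain := weight C w u' - weight C w u.
have [x [eqj ux]] := flip1P hflip.
set D := [set i | clause_sat u' (C i) != clause_sat u (C i)].
have gainE : gain = \sum_(i in D) (flip_coef x (u' x) (C i))%:~R * w i.
  exact: weight_flip.
have DN : D \subset flip_support x (u' x).
  apply/fintype.subsetP => i; rewrite !inE => hi.
  by rewrite -(clause_sat_flip eqj ux hi); move: hi; do 2!case: clause_sat.
have D0 : (0 < #|D|)%N.
  rewrite card_gt0; apply: contraTneq hlt => D0.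
  by rewrite -subr_gt0 -/gain gainE D0 big_set0 ltxx.
have [k [gain_lt size_le]] : exists k : 'I_m.+1,
    gain < (2 * m)%:R / (2 ^ k)%:R /\ (size (u1 :: s') <= 2 ^ k.+1)%N.
  apply: dyadic_scale => //; [exact: improving_path_size_lt hp | by rewrite subr_gt0 |].
  apply: le_trans slow _.
  have /andP[_ Wlast] := weight_bounds C (last a0 (u1 :: s')) w01.
  have /andP[W0 _] := weight_bounds C a0 w01; lra.
have hv : valid_index (k, x, u' x, D) by rewrite /valid_index D0 DN.
apply: le_trans (_ : height (maxsat_slab (k, x, u' x, D)) *
  slab_ind (maxsat_slab (k, x, u' x, D)) ws <= _); last first.
  by rewrite (bigD1 (k, x, u' x, D)) //= lerDl sumr_ge0.
rewrite /slab_ind slab_form_maxsat // -gainE /maxsat_slab hv /= gain_lt.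
by rewrite subr_gt0 hlt mulr1 ler_nat.
Qed.

Lemma card_flip_support x b : (#|flip_support x b| <= max_occ C)%N.
Proof.
apply: leq_trans (@leq_bigmax _ (fun y => #|[set i : 'I_m | y \in map fst (C i)]%classic|) x).
rewrite card_classic_set -cardsE; apply: subset_leq_card; apply/fintype.subsetP => i.
rewrite !inE /flip_coef => coef0; apply/mapP; move: coef0.
case: ifP => [/andP[xb _] _|_]; first by exists (x, b).
by case: ifP => [/andP[xb _] _|//]; exists (x, ~~ b).
Qed.

Lemma card_valid_index : (#|[set q | valid_index q]| <= 2 * m.+1 * n * 2 ^ max_occ C)%N.
Proof.
rewrite -sum1_card.
rewrite (eq_bigl (fun q : slab_index => xpredT q.1 && valid_index (q.1, q.2))); last first.
  by move=> [a D]; rewrite inE.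
rewrite -(pair_big_dep xpredT (fun a D => valid_index (a, D)) (fun _ _ => 1%N)) /=.
apply: (@leq_trans (\sum_(a : ('I_m.+1 * 'I_n) * bool) 2 ^ max_occ C)).
  apply: leq_sum => -[[k x] b] _; rewrite sum1_card.
  apply: (@leq_trans #|powerset (flip_support x b)|).
    by apply: subset_leq_card; apply/fintype.subsetP => D; rewrite !inE => /andP[].
  by rewrite card_powerset leq_pexp2l // card_flip_support.
by rewrite sum_nat_const !card_prod !card_ord card_bool; lia.
Qed.

Lemma sum_maxsat_slab_mass (phi : R) :
  \sum_q height (maxsat_slab q) * phi * width (maxsat_slab q) =
  (4 * m * #|[set q | valid_index q]|)%:R * phi.
Proof.
rewrite (eq_bigr (fun q => if valid_index q then (4 * m)%:R * phi else 0)); last first.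
  move=> [[[k x] b] D] _; rewrite /maxsat_slab; case: ifP => _ /=; last by rewrite !mul0r.
  rewrite expnS !natrM; by field; rewrite pnatr_eq0 expn_eq0.
by rewrite -big_mkcond sumr_const mulrnAl mul1r -mulrnA -[LHS]mulr_natl cardsE.
Qed.

End MaxSatSlabs.

Theorem mainTheorem9 :
  exists c : nat, forall (R : realType) (n m : nat) (C : 'I_m -> clause n)
    (f : 'I_m -> R -> R) (phi : R),
    (forall i, measurable_fun `[(0:R), (1:R)]%classic (f i)) ->
    (forall i x, x \in `[(0:R), (1:R)] -> 0 <= f i x <= phi) ->
    (forall i, (\int[lebesgue_measure]_(x in `[0%R, 1%R]%classic) (f i x)%:E
                 = 1)%E) ->
    (expected_max_iterations C f <=
       ((c * 2 ^ max_occ C * n * m ^ 2)%:R * phi)%:E)%E.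
Proof.
exists 16%N => R n m C f phi mf fb f1.
have dens_f i : density phi (f i) by split; [exact: mf | exact: fb | exact: f1].
set fs := [seq f i | i <- enum 'I_m].
have dens : List.Forall (density phi) fs.
  by rewrite /fs; elim: (enum _) => //= i s IH; constructor.
have size_fs : size fs = m by rewrite size_map size_enum_ord.
apply: le_trans (@iter_expect_slabs_le _ _ _ dens _ (maxsat_slab R C) _ _ (lexx 0) _ _) _.
- by rewrite size_fs; exact: slab_ok_maxsat.
- by move=> w; rewrite size_fs add0r; exact: max_iterations_le_slabs.
rewrite add0r sum_maxsat_slab_mass lee_fin.
have [m0|m_gt0] := posnP m.
  by rewrite [in (4 * m)%N]m0 [in (m ^ 2)%N]m0 !(muln0, mul0n, mul0r).
have phi0 := density_bound_ge0 (dens_f (Ordinal m_gt0)).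
rewrite ler_wpM2r // ler_nat; have := card_valid_index C; nia.
Qed.
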